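(* Suppose the Boolean algebra $B$ is complete. Let $W$ be a CFG-space over $B$, let $U,V\subset W$ be arbitrary subsets, and let $F:U\to V$ be an isometry (for the restricted metrics). Then there is an isometry $F':W\to W$ whose restriction to $U$ is $F$.
   Context: A Boolean metric space over a Boolean algebra $B$ is a set $X$ with a symmetric map $d:X\times X\to B$ such that $d(x,y)=0$ iff $x=y$, and $d(x,z)\le d(x,y)\vee d(y,z)$. A map is contractive if $d(f(x),f(y))\le d(x,y)$; an isometry is a bijection preserving $d$. A partition of $B$ is a finite family of pairwise disjoint elements with supremum $1$. Given $x_0,\dots,x_n\in X$ and a partition $a_0,\dots,a_n$, $x\in X$ is a convex combination of them with these coefficients if $a_i\wedge d(x,x_i)=0$ for all $i$. $X$ is convex if such a convex combination exists in $X$ for every choice of points and partition; finitely generated if some finite $S\subset X$ has every element of $X$ as a convex combination of elements of $S$. A CFG-space is a convex, finitely generated Boolean metric space. $B$ is complete if every subset of $B$ has a supremum. *)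

(* A Boolean algebra is a complemented distributive lattice
   with top and bottom: [ctbDistrLatticeType disp]. *)
From HB Require Import structures.
From Stdlib Require List.
From mathcomp Require Import all_boot all_order.
Set Implicit Arguments. Unset Strict Implicit. Unset Printing Implicit Defensive.
Import Order.TTheory.
Local Open Scope order_scope.

Section BoolMetric.
Context {disp : Order.disp_t} {B : ctbDistrLatticeType disp}.

Definition complete_BA : Prop :=
  forall P : B -> Prop, exists s : B,
    (forall b, P b -> b <= s) /\ (forall u, (forall b, P b -> b <= u) -> s <= u).

Definition bmetric {X : Type} (d : X -> X -> B) : Prop :=
  (forall x y, d x y = d y x) /\
  (forall x y, d x y = \bot <-> x = y) /\
  (forall x y z, d x z <= d x y `|` d y z).

Definition bpartition {n : nat} (a : 'I_n -> B) : Prop :=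
  (forall i j : 'I_n, i != j -> a i `&` a j = \bot) /\
  \join_(i < n) a i = \top.

Definition convex_comb {X : Type} (d : X -> X -> B) (x : X) {n : nat}
  (xs : 'I_n -> X) (a : 'I_n -> B) : Prop :=
  forall i : 'I_n, a i `&` d x (xs i) = \bot.

Definition bconvex {X : Type} (d : X -> X -> B) : Prop :=
  forall (n : nat) (xs : 'I_n -> X) (a : 'I_n -> B),
    bpartition a -> exists x : X, convex_comb d x xs a.

Definition fin_generated {X : Type} (d : X -> X -> B) : Prop :=
  exists S : seq X, forall x : X,
    exists (n : nat) (xs : 'I_n -> X) (a : 'I_n -> B),
      bpartition a /\ (forall i, List.In (xs i) S) /\ convex_comb d x xs a.

Definition CFG_space {X : Type} (d : X -> X -> B) : Prop :=
  bmetric d /\ bconvex d /\ fin_generated d.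

Definition sub_isometry {X : Type} (d : X -> X -> B) (U V : X -> Prop)
  (F : {x | U x} -> {x | V x}) : Prop :=
  bijective F /\ forall p q, d (proj1_sig (F p)) (proj1_sig (F q)) = d (proj1_sig p) (proj1_sig q).

Definition isometry {X : Type} (d : X -> X -> B) (f : X -> X) : Prop :=
  bijective f /\ forall x y, d (f x) (f y) = d x y.

End BoolMetric.
Arguments sub_isometry {disp B X} d U V F.
Arguments complete_BA {disp} B.

(* For points x, y the element ~` d x y is the region of B on which x and y
   agree; agreement is an equivalence relation region by region.  The proof
   has three layers.
   1. Gluing.  Convexity glues finitely many points along regions of B
      (glue_fin).  Finite generation yields a finite family of generators
      with which every point agrees piecewise (fin_generated_cover); using
      completeness, this upgrades finite gluing to gluing of arbitrary
      pairwise compatible families (glue_compatible).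
   2. One-point extension.  If p, q : I -> W are isometric families, every w
      has a realizer w' with d w' (q i) = d w (p i) for all i
      (extend_one_point).  Where w agrees with some p i, w' is glued from the
      q i; elsewhere w' is a point avoiding all q i, whose existence is a
      pigeonhole argument on the finitely many generators (classes_onto,
      agree_somewhere, avoid_cover).
   3. Back and forth.  Extending F alternately on both sides we reach
      isometric families that both contain all generators (back_and_forth).
      A point is determined by its distances to such a family, so realizers
      define an isometry of W extending F (extend_isometry). *)

From HB Require Import structures.
From mathcomp Require Import all_boot all_order.
From Stdlib Require Import ClassicalEpsilon Classical.
Set Implicit Arguments. Unset Strict Implicit. Unset Printing Implicit Defensive.

Import Order.Theory.
Local Open Scope order_scope.

(* A map on 'I_m preserving and reflecting an equivalence relation induces an
   injection, hence a bijection, of the finite set of classes: every class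
   contains the image of some index. *)
Lemma classes_onto m (r : rel 'I_m) (sg : 'I_m -> 'I_m) :
  reflexive r -> symmetric r -> transitive r ->
  (forall i j, r (sg i) (sg j) = r i j) -> forall k, exists j, r k (sg j).
Proof.
move=> r_refl r_sym r_trans r_sg k.
pose cls i := [set l | r i l].
have clsE i j : (cls i == cls j) = r i j.
  apply/eqP/idP => [eq_ij | rij].
    suff : j \in cls i by rewrite inE.
    by rewrite eq_ij inE.
  apply/setP => l; rewrite !inE; apply/idP/idP => [ril | rjl].
    by apply: r_trans ril; rewrite r_sym.
  exact: r_trans rjl.
pose K := [set cls i | i : 'I_m].
pose f (A : {set 'I_m}) := if [pick l in A] is Some l then cls (sg l) else set0.
have fE i : f (cls i) = cls (sg i).
  rewrite /f; case: pickP => [l | none]; last by have := none i; rewrite inE r_refl.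
  by rewrite inE => ril; apply/eqP; rewrite clsE r_sg r_sym.
have fK : f @: K = K.
  apply/eqP; rewrite eqEcard; apply/andP; split.
    by apply/subsetP => _ /imsetP[_ /imsetP[i _ ->] ->]; rewrite fE imset_f.
  rewrite (card_in_imset (f := f)) // => _ _ /imsetP[i _ ->] /imsetP[j _ ->]; rewrite !fE.
  by move/eqP; rewrite clsE r_sg -clsE => /eqP.
have : cls k \in f @: K by rewrite fK imset_f.
by case/imsetP => _ /imsetP[j _ ->]; rewrite fE => /eqP; rewrite clsE; exists j.
Qed.

Section BooleanAlgebra.
Context {disp : Order.disp_t} {B : ctbDistrLatticeType disp}.
Implicit Types x y u e : B.

Lemma meet_le_residual x y u : (x `&` y <= u) = (y <= ~` x `|` u).
Proof. by rewrite -leBLR diffE complK meetC. Qed.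

Lemma le_by_cases e x u : x `&` e <= u -> x `&` ~` e <= u -> x <= u.
Proof.
move=> le_e le_ce; have <- : x `&` (e `|` ~` e) = x by rewrite joinxC meetx1.
by rewrite meetUr leUx le_e le_ce.
Qed.

Lemma meet_join_mono (T : Type) (r : seq T) (F G : T -> B) x :
  (forall t, x `&` F t <= G t) -> x `&` \join_(t <- r) F t <= \join_(t <- r) G t.
Proof.
move=> le_FG; elim: r => [|t r IH]; first by rewrite !big_nil meetx0.
by rewrite !big_cons meetUr leU2.
Qed.

Lemma join_In_le (T : Type) (r : seq T) (F : T -> B) t :
  List.In t r -> F t <= \join_(s <- r) F s.
Proof.
elim: r => [|s r IH] //= [<- | t_r]; rewrite big_cons; first exact: leUl.
exact: le_trans (IH t_r) (leUr _ _).
Qed.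

Variable complB : complete_BA B.

Definition Sup (P : B -> Prop) : B :=
  proj1_sig (constructive_indefinite_description _ (complB P)).

Lemma Sup_ub (P : B -> Prop) x : P x -> x <= Sup P.
Proof.
by rewrite /Sup; case: constructive_indefinite_description => s [ub _] /=; apply: ub.
Qed.

Lemma Sup_le (P : B -> Prop) u : (forall x, P x -> x <= u) -> Sup P <= u.
Proof.
by rewrite /Sup; case: constructive_indefinite_description => s [_ least] /=; apply: least.
Qed.

Lemma Sup_meet_le (P : B -> Prop) x u :
  (forall y, P y -> x `&` y <= u) -> x `&` Sup P <= u.
Proof.
by move=> le_P; rewrite meet_le_residual; apply: Sup_le => y /le_P; rewrite meet_le_residual.
Qed.

Lemma Sup_meets (P : B -> Prop) c : c != \bot -> c <= Sup P ->
  exists2 y, P y & c `&` y != \bot.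
Proof.
move=> c0 c_Sup; apply: NNPP => none; move/negP: c0; apply.
rewrite -lex0 -(meet_idPl c_Sup); apply: Sup_meet_le => y Py.
by rewrite lex0; apply/negPn/negP => ne; apply: none; exists y.
Qed.

Lemma Sup_refine (K : finType) (P : K -> B -> Prop) c : c != \bot ->
  (forall k, c <= Sup (P k)) ->
  exists c', [/\ c' <= c, c' != \bot & forall k, exists2 y, P k y & c' <= y].
Proof.
move=> c0 c_Sup.
suff [c' [c'c c'0 c'P]] : exists c', [/\ c' <= c, c' != \bot &
    forall k, k \in enum K -> exists2 y, P k y & c' <= y].
  by exists c'; split=> // k; apply: c'P; rewrite mem_enum.
elim: (enum K) => [|k s [c' [c'c c'0 c'P]]]; first by exists c; split.
have [y Py c'y0] := Sup_meets c'0 (le_trans c'c (c_Sup k)).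
exists (c' `&` y); split => //; first exact: le_trans (leIl _ _) c'c.
move=> l; rewrite inE => /orP[/eqP -> | l_s]; first by exists y; rewrite ?leIr.
by have [z Pz c'z] := c'P l l_s; exists z; rewrite // leIxl.
Qed.

End BooleanAlgebra.

Section Metric.
Context {disp : Order.disp_t} {B : ctbDistrLatticeType disp}.
Context (W : Type) (d : W -> W -> B) (metric_d : bmetric d).
Implicit Types x y z w : W.

Lemma dsym x y : d x y = d y x. Proof. by case: metric_d. Qed.
Lemma dxx x : d x x = \bot. Proof. by case: metric_d => _ [-> _]. Qed.
Lemma d_eq0 x y : d x y = \bot -> x = y. Proof. by case: metric_d => _ [/(_ x y) []]. Qed.

(* [~` d x y] is the region where x and y agree; agreement is an equivalence. *)
Lemma agree_refl c x : c <= ~` d x x.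
Proof. by rewrite dxx compl0 lex1. Qed.

Lemma agree_trans x y z : ~` d x y `&` ~` d y z <= ~` d x z.
Proof. by rewrite -complU leC; case: metric_d => _ [_]. Qed.

Lemma agree_trans_le c x y z : c <= ~` d x y -> c <= ~` d y z -> c <= ~` d x z.
Proof. by move=> cxy cyz; apply: le_trans (agree_trans x y z); rewrite lexI cxy. Qed.

Lemma agree_congr c x x' y y' : c <= ~` d x x' -> c <= ~` d y y' ->
  (c <= ~` d x y) = (c <= ~` d x' y').
Proof.
move=> cxx' cyy'; have cx'x : c <= ~` d x' x by rewrite dsym.
have cy'y : c <= ~` d y' y by rewrite dsym.
apply/idP/idP => [cxy | cx'y'].
  exact: agree_trans_le cx'x (agree_trans_le cxy cyy').
exact: agree_trans_le cxx' (agree_trans_le cx'y' cy'y).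
Qed.

Definition iso_fam (I : Type) (p q : I -> W) : Prop :=
  forall i j, d (p i) (p j) = d (q i) (q j).

Definition realizes (I : Type) (p q : I -> W) (x x' : W) : Prop :=
  forall i, d x' (q i) = d x (p i).

Lemma iso_fam_sym (I : Type) (p q : I -> W) : iso_fam p q -> iso_fam q p.
Proof. by move=> pq i j; rewrite pq. Qed.

Definition extf (I : Type) (p : I -> W) (a : W) (o : option I) : W :=
  if o is Some i then p i else a.

Lemma iso_fam_extend (I : Type) (p q : I -> W) a a' :
  iso_fam p q -> realizes p q a a' -> iso_fam (extf p a) (extf q a').
Proof. by move=> pq real_a [i|] [j|] //=; rewrite ?dxx // -?real_a // dsym -real_a dsym. Qed.

(* Finite generation only matters through this covering property of a
   finite family of generators. *)
Lemma fin_generated_cover : fin_generated d ->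
  exists m (gen : 'I_m -> W), forall x, \join_(k < m) ~` d x (gen k) = \top.
Proof.
move=> [S S_gen]; exists (size S), (tnth (in_tuple S)) => x.
rewrite -(big_tnth _ _ _ xpredT (fun s => ~` d x s)); apply/eqP; rewrite eq_le lex1 /=.
have [n [xs [a [[_ <-] [xs_S x_comb]]]]] := S_gen x.
apply: joins_le => i _; apply: le_trans (join_In_le _ (xs_S i)).
by rewrite -disj_leC; apply/eqP; apply: x_comb.
Qed.

Hypothesis conv_d : bconvex d.

Lemma glue2 x y (a : B) : exists z, a <= ~` d z x /\ ~` a <= ~` d z y.
Proof.
pose xs (i : 'I_2) := if val i == 0 then x else y.
pose as_ (i : 'I_2) := if val i == 0 then a else ~` a.
have [|z z_comb] := @conv_d 2 xs as_.
  split; last by rewrite big_ord_recl big_ord1 /as_ /= joinxC.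
  by move=> [[|[|i]] Hi] [[|[|j]] Hj] //= _; rewrite /as_ /= ?meetxC ?meetCx.
by exists z; split; rewrite -disj_leC; apply/eqP; [apply: (z_comb ord0) | apply: (z_comb ord_max)].
Qed.

Lemma glue_fin (T : Type) (r : seq T) (b : T -> B) (y : T -> W) (y0 : W) :
  exists z, \join_(t <- r) b t <= \join_(t <- r) (b t `&` ~` d z (y t)).
Proof.
elim: r => [|t r [z' glue_r]]; first by exists y0; rewrite !big_nil.
have [z [z_t z_z']] := glue2 (y t) z' (b t).
exists z; rewrite !big_cons (meet_idPl z_t) leUx leUl /=.
apply: (le_by_cases (e := b t)); first exact: le_trans (leIr _ _) (leUl _ _).
apply: le_trans (leUr _ _); rewrite meetC.
apply: le_trans (leI2 z_z' glue_r) _; apply: meet_join_mono => s.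
by rewrite meetCA leI2 // agree_trans.
Qed.

Variables (m : nat) (gen : 'I_m -> W).
Hypothesis gen_cover : forall x, \join_(k < m) ~` d x (gen k) = \top.

Lemma le_via_gen x (c u : B) : (forall k, c `&` ~` d x (gen k) <= u) -> c <= u.
Proof.
move=> le_k; rewrite -[c]meetx1 -(gen_cover x).
by apply: le_trans (meet_join_mono _ le_k) _; apply: joins_le.
Qed.

Lemma realizer_dist_le (I : Type) (p q : I -> W) x y x' y' :
  (forall k, exists i, p i = gen k) -> realizes p q x x' -> realizes p q y y' ->
  d x y <= d x' y'.
Proof.
move=> p_gen real_x real_y; rewrite -leC; apply: (le_via_gen (x := x)) => k.
have [i <-] := p_gen k.
have agree_y : ~` d x' y' `&` ~` d x (p i) <= ~` d y (p i).
  by rewrite -real_x -real_y [d x' y']dsym; apply: agree_trans.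
by apply: le_trans (agree_trans x (p i) y); rewrite lexI leIr [d (p i) y]dsym.
Qed.

Lemma realizer_unique (I : Type) (q : I -> W) y y' :
  (forall k, exists i, q i = gen k) -> (forall i, d y (q i) = d y' (q i)) -> y = y'.
Proof.
move=> q_gen same_d; apply: d_eq0; apply/eqP; rewrite -lex0 -(dxx y).
by apply: (realizer_dist_le (q := q) q_gen) => // i; rewrite same_d.
Qed.

Hypothesis complB : complete_BA B.

Definition near (I : Type) (p : I -> W) (w : W) : B :=
  Sup complB (fun c => exists i, c = ~` d w (p i)).

Lemma agree_le_near (I : Type) (p : I -> W) w i : ~` d w (p i) <= near p w.
Proof. by apply: Sup_ub; exists i. Qed.

Lemma near_gen x : near gen x = \top.
Proof.
apply/eqP; rewrite eq_le lex1 -(gen_cover x).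
by apply: joins_le => k _; apply: agree_le_near.
Qed.

Lemma glue_compatible (J : Type) (b : J -> B) (y : J -> W) (y0 : W) :
  (forall j l, b j `&` b l <= ~` d (y j) (y l)) ->
  exists z, forall j, b j <= ~` d z (y j).
Proof.
move=> compat.
(* c k is where the generator k can stand in for some y j inside b j. *)
pose c k := Sup complB (fun e => exists j, e = b j `&` ~` d (y j) (gen k)).
have [z glue_z] := glue_fin (index_enum 'I_m) c gen y0.
exists z => j.
have b_c : b j <= \join_(k < m) c k.
  apply: (le_via_gen (x := y j)) => k.
  by apply: (joins_min (j := k)) => //; apply: Sup_ub; exists j.
have b_ck k : b j `&` c k <= ~` d (y j) (gen k).
  apply: Sup_meet_le => _ [l ->]; rewrite meetA.
  exact: le_trans (leI2 (compat j l) (lexx _)) (agree_trans _ _ _).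
rewrite -(meet_idPl (le_trans b_c glue_z)).
apply: le_trans (meet_join_mono (G := fun _ => ~` d z (y j)) _ _) _; last first.
  by apply: joins_le.
move=> k; rewrite meetA; apply: le_trans (leI2 (b_ck k) (lexx _)) _.
by rewrite [d z (gen k)]dsym [d z (y j)]dsym; apply: agree_trans.
Qed.

(* Suppose that on a nonzero region c each generator agrees
   with a member q (sg k) of the family q.  Then an arbitrary point w agrees,
   somewhere in c, with the corresponding member p (sg j) of an isometric
   family p: after shrinking c, agreement with generators is an equivalence on
   the finitely many generators, and matching generators through p and q
   permutes its classes. *)
Lemma agree_somewhere (I : Type) (p q : I -> W) (sg : 'I_m -> I) w (c : B) :
  iso_fam p q -> c != \bot -> (forall k, c <= ~` d (gen k) (q (sg k))) ->
  exists j, c `&` ~` d w (p (sg j)) != \bot.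
Proof.
move=> pq c0 c_sg.
pose pt (o : option 'I_m) := if o is Some k then p (sg k) else w.
have c_near o : c <= near gen (pt o) by rewrite near_gen lex1.
have [c' [c'c c'0 c'_gen]] := Sup_refine c0 c_near.
have /choice[tau tau_gen] : forall k, exists l, c' <= ~` d (p (sg k)) (gen l).
  by move=> k; have [_ [l ->] c'l] := c'_gen (Some k); exists l.
have [_ [l0 ->] c'_w] := c'_gen None.
have c'_sg k : c' <= ~` d (q (sg k)) (gen k) by rewrite dsym (le_trans c'c (c_sg k)).
pose r : rel 'I_m := fun i j => c' <= ~` d (gen i) (gen j).
have r_tau i j : r (tau i) (tau j) = r i j.
  by rewrite /r -(agree_congr (tau_gen i) (tau_gen j)) pq (agree_congr (c'_sg i) (c'_sg j)).
have [|||j r_l0] := classes_onto (r := r) (sg := tau) _ _ _ r_tau l0.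
- by move=> i; apply: agree_refl.
- by move=> i j; rewrite /r dsym.
- by move=> j i k; apply: agree_trans_le.
exists j; apply: contraNneq c'0 => eq0; rewrite -lex0 -eq0 lexI c'c /=.
by apply: agree_trans_le c'_w (agree_trans_le r_l0 _); rewrite dsym.
Qed.

Lemma avoid_cover (I : Type) (p q : I -> W) w : iso_fam p q ->
  ~` near p w <= \join_(k < m) ~` near q (gen k).
Proof.
move=> pq; set J := \join_(k < m) _.
have [c0|c0] := eqVneq (~` near p w `&` ~` J) \bot; first by rewrite -[J]complK -disj_leC c0.
exfalso.
have c_near k : ~` near p w `&` ~` J <= near q (gen k).
  by apply: leIxr; rewrite leCx; apply: (joins_sup (j := k)).
have [c' [c'c c'0 c'_near]] := Sup_refine c0 c_near.
have /choice[sg c'_sg] : forall k, exists i, c' <= ~` d (gen k) (q i).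
  by move=> k; have [_ [i ->] c'i] := c'_near k; exists i.
have [j /negP[]] := agree_somewhere w pq c'0 c'_sg.
rewrite -lex0; apply: le_trans (leI2 (le_trans c'c (leIl _ _)) (agree_le_near p w (sg j))) _.
by rewrite meetCx.
Qed.

Lemma avoiding_point (I : Type) (p q : I -> W) w : iso_fam p q ->
  exists z, forall i, ~` near p w <= d z (q i).
Proof.
move=> pq; have [z glue_z] := glue_fin (index_enum 'I_m) (fun k => ~` near q (gen k)) gen w.
exists z => i; apply: le_trans (avoid_cover w pq) _; apply: le_trans glue_z _.
apply: joins_le => k _; apply: (le_by_cases (e := d z (q i))); first exact: leIr.
apply: le_trans (_ : ~` near q (gen k) `&` near q (gen k) <= _); last by rewrite meetCx le0x.
rewrite -meetA leI2 //; apply: le_trans (agree_le_near q (gen k) i).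
by rewrite dsym; apply: agree_trans.
Qed.

(* One-point extension: relative to isometric families, every point has a
   realizer.  It is glued from the q i where w agrees with the p i, and from an
   avoiding point elsewhere. *)
Lemma extend_one_point (I : Type) (p q : I -> W) : iso_fam p q ->
  forall w, exists w', realizes p q w w'.
Proof.
move=> pq w; have [z z_avoid] := avoiding_point w pq.
pose b (o : option I) := if o is Some i then ~` d w (p i) else ~` near p w.
have off_near i : ~` d w (p i) `&` ~` near p w <= \bot.
  by apply: le_trans (leI2 (agree_le_near p w i) (lexx _)) _; rewrite meetxC.
have [|w' w'_glued] := glue_compatible (b := b) (y := extf q z) w.
  move=> [i|] [j|] /=.
  - by rewrite -pq [d w (p i)]dsym; apply: agree_trans.
  - exact: le_trans (off_near i) (le0x _).
  - by rewrite meetC; apply: le_trans (off_near j) (le0x _).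
  - exact: agree_refl.
exists w' => i; apply: compl_inj; apply/le_anti; rewrite (w'_glued (Some i)) andbT.
apply: (le_by_cases (e := near p w)).
  rewrite /near; apply: Sup_meet_le => _ [j ->].
  have agree_pj : ~` d w' (q i) `&` ~` d w (p j) <= ~` d (p j) (p i).
    rewrite pq meetC; apply: le_trans (leI2 (w'_glued (Some j)) (lexx _)) _.
    by rewrite [d w' (q j)]dsym; apply: agree_trans.
  by apply: le_trans (agree_trans w (p j) (p i)); rewrite lexI leIr agree_pj.
apply: le_trans (_ : ~` d z (q i) `&` d z (q i) <= _); last by rewrite meetCx le0x.
rewrite lexI (leIxr _ (z_avoid i)) andbT.
apply: le_trans (agree_trans z w' (q i)); rewrite lexI leIl andbT [d z w']dsym.
by apply: leIxr; apply: (w'_glued None).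
Qed.

(* Back and forth: starting from the graph of f, alternately adjoin a generator
   to each side together with a realizer on the other side. *)
Lemma back_and_forth (U : W -> Prop) (f : {x | U x} -> W)
  (f_iso : forall u v, d (f u) (f v) = d (proj1_sig u) (proj1_sig v)) (s : seq 'I_m) :
  exists (I : Type) (p q : I -> W), [/\ iso_fam p q,
    forall x (Ux : U x), exists i, p i = x /\ q i = f (exist _ x Ux)
    & forall k, k \in s -> (exists i, p i = gen k) /\ (exists i, q i = gen k)].
Proof.
elim: s => [|k s [I [p [q [pq pq_f pq_s]]]]].
  exists {x | U x}, (@proj1_sig _ _), f; split=> [u v | x Ux | //].
    by rewrite f_iso.
  by exists (exist _ x Ux).
have [a' real_a'] := extend_one_point pq (gen k).
have pq1 := iso_fam_extend pq real_a'.
have [a real_a] := extend_one_point (iso_fam_sym pq1) (gen k).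
have pq2 := iso_fam_extend pq1 (a := a) (a' := gen k) (fun o => esym (real_a o)).
exists (option (option I)), (extf (extf p (gen k)) a), (extf (extf q a') (gen k)).
split => // [x Ux | l]; first by have [i [pi qi]] := pq_f x Ux; exists (Some (Some i)).
rewrite inE => /orP[/eqP -> | /pq_s [[i pi] [j qj]]].
  by split; [exists (Some None) | exists None].
by split; [exists (Some (Some i)) | exists (Some (Some j))].
Qed.

(* Once both families contain the generators, the realizer map is an isometry
   of W extending f. *)
Lemma extend_isometry (U : W -> Prop) (f : {x | U x} -> W)
  (f_iso : forall u v, d (f u) (f v) = d (proj1_sig u) (proj1_sig v)) :
  exists F' : W -> W, isometry d F' /\ forall x (Ux : U x), F' x = f (exist _ x Ux).
Proof.
have [I [p [q [pq pq_f pq_gen]]]] := back_and_forth f_iso (enum 'I_m).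
have p_gen k : exists i, p i = gen k by case: (pq_gen k); rewrite ?mem_enum.
have q_gen k : exists i, q i = gen k by case: (pq_gen k); rewrite ?mem_enum.
have /choice[T real_T] := extend_one_point pq.
have /choice[T' real_T'] := extend_one_point (iso_fam_sym pq).
exists T; split; first split.
- exists T' => x.
    by apply: (realizer_unique p_gen) => i; rewrite real_T' real_T.
  by apply: (realizer_unique q_gen) => i; rewrite real_T real_T'.
- move=> x y; apply/le_anti; rewrite (realizer_dist_le p_gen (real_T x) (real_T y)) andbT.
  by apply: (realizer_dist_le q_gen) => i; rewrite real_T.
- move=> x Ux; have [i [pi qi]] := pq_f x Ux; rewrite -qi.
  by apply: (realizer_unique q_gen) => j; rewrite real_T -pi pq.
Qed.

End Metric.

Theorem theorem3 (disp : Order.disp_t) (B : ctbDistrLatticeType disp)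
  (W : Type) (d : W -> W -> B) (U V : W -> Prop)
  (F : {x | U x} -> {x | V x}) :
  complete_BA B -> CFG_space d -> sub_isometry d U V F ->
  exists F' : W -> W, isometry d F' /\
    forall (x : W) (hx : U x), F' x = proj1_sig (F (exist _ x hx)).
Proof.
move=> complB [metric_d [conv_d fin_gen]] [_ F_iso].
have [m [gen gen_cover]] := fin_generated_cover fin_gen.
exact: (extend_isometry metric_d conv_d gen_cover complB F_iso).
Qed.
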